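(* Let $W:\mathbb{R}\to\mathbb{R}$ be an AWGN channel with noise variance $\sigma_W^2>0$, i.e. for input $x$ the output is distributed as $\mathcal{N}(x,\sigma_W^2)$. Let $P>0$ and, for each $n$, let $e_{0,n}:\{0,1\}^{l_n}\to\mathbb{R}^n$ be an encoder satisfying $\frac1n\|e_{0,n}(v)\|_2^2\le P$ for all $v\in\{0,1\}^{l_n}$. Let $W_{e_{0,n}}:\{0,1\}^{l_n}\to\mathbb{R}^n$ be the channel whose output given input $v$ is $e_{0,n}(v)+N$ with $N\sim\mathcal{N}(0,\sigma_W^2 I_n)$. Then for every $0<\delta<1/2$, with $\epsilon_n=e^{-n\delta^2/8}$, \[ I_{\max}^{\epsilon_n}(W_{e_{0,n}})\le \frac n2\log\Big(1+\delta+\frac{P}{\sigma_W^2}\Big)+\frac{n\delta\log e}{2}+o(n)\quad\text{as } n\to\infty, \] with logarithms to base 2.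
   Context: For a (possibly subnormalized) channel $V$ from a finite set $\mathcal{V}$ to $\mathbb{R}^n$ with densities $\omega(z\mid v)$ w.r.t. Lebesgue measure, its max-information is $I_{\max}(V)=\log_2\int_{\mathbb{R}^n}\max_{v\in\mathcal{V}}\omega(z\mid v)\,dz$. For measurable $\mathcal{T}\subseteq\mathcal{V}\times\mathbb{R}^n$, $V_{\mathcal{T}}$ is the subnormalized channel with density $\omega_{\mathcal{T}}(z\mid v)=\omega(z\mid v)$ if $(v,z)\in\mathcal{T}$ and $0$ otherwise. The $\epsilon$-smooth max-information $I_{\max}^{\epsilon}(V)$ is the infimum of $I_{\max}(V_{\mathcal{T}})$ over all such $\mathcal{T}$ with $V(\{z:(v,z)\in\mathcal{T}\}\mid v)\ge 1-\epsilon$ for every $v\in\mathcal{V}$. *)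

From HB Require Import structures.
From mathcomp Require Import all_boot all_order all_algebra.
From mathcomp Require Import all_classical all_reals all_analysis.

Set Implicit Arguments.
Unset Strict Implicit.
Unset Printing Implicit Defensive.

Import Order.TTheory GRing.Theory Num.Theory.
Local Open Scope classical_set_scope.
Local Open Scope ring_scope.

Section Defs.
Variable R : realType.

Definition log2 (x : R) : R := ln x / ln 2.

Definition elog2 (x : \bar R) : \bar R :=
  match x with
  | EFin r => if (0 < r)%R then EFin (log2 r) else -oo
  | +oo => +oo
  | -oo => -oo
  end%E.

(** Lebesgue integral over R^n (points of R^n are n-tuples), written as the
    iterated integral of the one-dimensional Lebesgue measure. For the
    nonnegative measurable integrands used below this is the integral
    w.r.t. n-dimensional Lebesgue measure (Tonelli). *)
Fixpoint int_Rn (n : nat) : (n.-tuple R -> \bar R) -> \bar R :=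
  match n return (n.-tuple R -> \bar R) -> \bar R with
  | 0 => fun f => f [tuple]
  | m.+1 => fun f =>
      (\int[@lebesgue_measure R]_(x in setT)
         int_Rn (fun t : m.-tuple R => f (cons_tuple x t)))%E
  end.

(** max-information of a (possibly subnormalized) channel V -> R^n given by
    densities w v z = omega(z | v) *)
Definition Imax (V : finType) (n : nat) (w : V -> n.-tuple R -> R) : \bar R :=
  elog2 (int_Rn (fun z => (\big[Num.max/0]_(v : V) w v z)%:E)).

(** restriction V_T of the channel to T, where T \subseteq V x R^n is given
    by its sections T v = {z | (v, z) \in T} *)
Definition restr_ch (V : finType) (n : nat) (w : V -> n.-tuple R -> R)
  (T : V -> set (n.-tuple R)) : V -> n.-tuple R -> R :=
  fun v z => \1_(T v) z * w v z.

Definition ch_prob (V : finType) (n : nat) (w : V -> n.-tuple R -> R)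
  (v : V) (A : set (n.-tuple R)) : \bar R :=
  int_Rn (fun z => (\1_A z * w v z)%:E).

Definition smooth_Imax (V : finType) (n : nat) (eps : R)
  (w : V -> n.-tuple R -> R) : \bar R :=
  ereal_inf [set Imax (restr_ch w T) | T in
    [set T : V -> set (n.-tuple R) |
      (forall v, measurable (T v)) /\
      (forall v, ((1 - eps)%:E <= ch_prob w v (T v))%E)]].

Definition awgn_ch (sigma2 : R) (V : finType) (n : nat)
  (e : V -> n.-tuple R) : V -> n.-tuple R -> R :=
  fun v z => \prod_(i < n)
     normal_pdf (tnth (e v) i) (Num.sqrt sigma2) (tnth z i).

End Defs.

(* Compare the channel output density w_v = N(e v, sigma^2 I) with the reference
   density Q = N(0, tau^2 I), tau^2 = (1 + delta) sigma^2 + P.  Their ratio is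
   rho^n exp(L_v), where L_v is a sum of quadratic terms.  Cutting each w_v to
   the set {L_v <= lambda} keeps max_v w_v below rho^n e^lambda Q, so the
   max-information of the cut channel is at most log2 (rho^n e^lambda); a
   Chernoff bound with exponent s = delta / 2, whose moment generating function
   is an explicit Gaussian integral, shows that the cut removes probability at
   most exp (- n delta^2 / 8) when lambda is chosen appropriately.  The power
   constraint enters only through the bound on that moment generating
   function, and the estimate holds for every n with no o(n) term. *)

From HB Require Import structures.
From mathcomp Require Import all_boot all_order all_algebra.
From mathcomp Require Import all_classical all_reals all_analysis.
From mathcomp Require Import measurable_realfun.
From mathcomp Require Import ring lra.

Import Order.TTheory GRing.Theory Num.Theory.
Local Open Scope classical_set_scope.
Local Open Scope ring_scope.

Lemma measurable_bigmaxr d (T : measurableType d) (R : realType) (I : Type)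
    (r : seq I) (F : I -> T -> R) :
  (forall i, measurable_fun setT (F i)) ->
  measurable_fun setT (fun x => \big[Num.max/0]_(i <- r) F i x).
Proof.
move=> mF; elim: r => [|i r IH].
  by under eq_fun do rewrite big_nil; exact: measurable_cst.
by under eq_fun do rewrite big_cons; exact: measurable_maxr.
Qed.

Section IteratedIntegral.
Context {R : realType}.
Local Notation mu := (@lebesgue_measure R).
Local Open Scope ereal_scope.

Lemma int_Rn_ge0 n (f : n.-tuple R -> \bar R) :
  (forall t, 0 <= f t) -> 0 <= int_Rn f.
Proof.
elim: n f => [|n IH] f f0 /=; first exact: f0.
by apply: integral_ge0 => x _; apply: IH.
Qed.

Lemma measurable_int_Rn n d (X : measurableType d) (f : X * n.-tuple R -> \bar R) :
  measurable_fun setT f -> (forall z, 0 <= f z) ->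
  measurable_fun setT (fun x => int_Rn (fun t => f (x, t))).
Proof.
elim: n d X f => [|n IH] d X f mf f0 /=; first exact: measurable_fun_pair1.
pose F (p : X * R) := int_Rn (fun t => f (p.1, cons_tuple p.2 t)).
have mF : measurable_fun setT F.
  apply: (IH _ _ (fun q : (X * R) * n.-tuple R => f (q.1.1, cons_tuple q.1.2 q.2))).
  - apply: measurableT_comp => //; apply: measurable_fun_pair.
      exact: measurableT_comp.
    exact: measurable_cons (measurableT_comp measurable_snd measurable_fst) _.
  - by move=> q; apply: f0.
apply: (measurable_fun_fubini_tonelli_F (m2 := mu) F mF).
by move=> p; apply: int_Rn_ge0.
Qed.

Lemma measurable_int_Rn_cons n (f : n.+1.-tuple R -> \bar R) :
  measurable_fun setT f -> (forall z, 0 <= f z) ->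
  measurable_fun setT (fun x => int_Rn (fun t => f (cons_tuple x t))).
Proof.
move=> mf f0.
have /= := @measurable_int_Rn n _ _ (fun q : R * n.-tuple R => f (cons_tuple q.1 q.2)).
by apply=> //; apply: measurableT_comp mf _; exact: measurable_cons.
Qed.

Lemma measurable_fun_cons_tuple n (f : n.+1.-tuple R -> \bar R) (x : R) :
  measurable_fun setT f -> measurable_fun setT (fun t => f (cons_tuple x t)).
Proof. by move=> mf; apply: measurableT_comp mf _; exact: measurable_cons. Qed.

Lemma le_int_Rn n (f g : n.-tuple R -> \bar R) :
  measurable_fun setT f -> measurable_fun setT g ->
  (forall t, 0 <= f t) -> (forall t, f t <= g t) -> int_Rn f <= int_Rn g.
Proof.
elim: n f g => [|n IH] f g mf mg f0 fg /=; first exact: fg.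
have g0 t : 0 <= g t by apply: le_trans (fg t).
apply: ge0_le_integral => //.
- by move=> x _; apply: int_Rn_ge0.
- exact: measurable_int_Rn_cons.
- exact: measurable_int_Rn_cons.
- by move=> x _; apply: IH => //; exact: measurable_fun_cons_tuple.
Qed.

Lemma int_RnD n (f g : n.-tuple R -> \bar R) :
  measurable_fun setT f -> measurable_fun setT g ->
  (forall t, 0 <= f t) -> (forall t, 0 <= g t) ->
  int_Rn (fun t => f t + g t) = int_Rn f + int_Rn g.
Proof.
elim: n f g => [|n IH] f g mf mg f0 g0 //=.
rewrite -ge0_integralD //.
- by apply: eq_integral => x _; apply: IH => //; exact: measurable_fun_cons_tuple.
- by move=> x _; apply: int_Rn_ge0.
- exact: measurable_int_Rn_cons.
- by move=> x _; apply: int_Rn_ge0.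
- exact: measurable_int_Rn_cons.
Qed.

Lemma int_RnZl n (c : R) (f : n.-tuple R -> \bar R) :
  (0 <= c)%R -> measurable_fun setT f -> (forall t, 0 <= f t) ->
  int_Rn (fun t => c%:E * f t) = c%:E * int_Rn f.
Proof.
elim: n f => [|n IH] f c0 mf f0 //=.
under eq_integral => x _.
  rewrite IH //; last exact: measurable_fun_cons_tuple.
over.
rewrite ge0_integralZl_EFin //; first by move=> x _; apply: int_Rn_ge0.
exact: measurable_int_Rn_cons.
Qed.

Lemma measurable_prod_tnth n (h : 'I_n -> R -> R) :
  (forall i, measurable_fun setT (h i)) ->
  measurable_fun setT (fun z : n.-tuple R => (\prod_(i < n) h i (tnth z i))%R).
Proof.
move=> mh; apply: measurable_prod => i _.
exact: measurableT_comp (mh i) (measurable_tnth i).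
Qed.

Lemma int_Rn_prod n (h : 'I_n -> R -> R) (r : 'I_n -> R) :
  (forall i x, 0 <= h i x)%R -> (forall i, measurable_fun setT (h i)) ->
  (forall i, \int[mu]_x (h i x)%:E = (r i)%:E) ->
  int_Rn (fun z => (\prod_(i < n) h i (tnth z i))%:E) = (\prod_(i < n) r i)%:E.
Proof.
elim: n h r => [|n IH] h r h0 mh hr /=; first by rewrite !big_ord0.
have r0 i : (0 <= r i)%R.
  by rewrite -lee_fin -hr; apply: integral_ge0 => x _; rewrite lee_fin.
have inner x : int_Rn (fun t => (\prod_(i < n.+1) h i (tnth (cons_tuple x t) i))%:E)
    = ((\prod_(i < n) r (lift ord0 i)) * h ord0 x)%:E.
  transitivity (int_Rn (fun t : n.-tuple R =>
      (h ord0 x)%:E * (\prod_(i < n) h (lift ord0 i) (tnth t i))%:E)).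
    congr int_Rn; apply/funext => t; rewrite big_ord_recl EFinM; congr (_ * _%:E).
    by apply: eq_bigr => i _; rewrite tnthS.
  rewrite int_RnZl //; last by move=> t; rewrite lee_fin prodr_ge0.
    by rewrite (IH (fun i => h (lift ord0 i)) (fun i => r (lift ord0 i))) // -EFinM mulrC.
  by apply/measurable_EFinP; apply: (@measurable_prod_tnth n (fun i => _)) => i.
under eq_integral => x _ do rewrite inner EFinM.
rewrite ge0_integralZl_EFin //.
- by rewrite (hr ord0) -EFinM big_ord_recl mulrC.
- by move=> x _; rewrite lee_fin.
- by apply/measurable_EFinP; exact: mh.
- exact: prodr_ge0.
Qed.

End IteratedIntegral.

Section Channel.
Context {R : realType} {V : finType} {n : nat} {w : V -> n.-tuple R -> R}.
Hypothesis w_ge0 : forall v z, (0 <= w v z)%R.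
Hypothesis measurable_w : forall v, measurable_fun setT (w v).
Local Open Scope ereal_scope.

Lemma ch_probC v (A : set (n.-tuple R)) : measurable A ->
  ch_prob w v A + ch_prob w v (~` A) = int_Rn (fun z => (w v z)%:E).
Proof.
move=> mA; rewrite /ch_prob -int_RnD.
- congr int_Rn; apply/funext => z; rewrite -EFinD -mulrDl !indicE in_setC.
  by case: (z \in A); rewrite /= ?addr0 ?add0r mul1r.
- by apply/measurable_EFinP/measurable_funM => //; exact: measurable_indic.
- by apply/measurable_EFinP/measurable_funM => //; exact/measurable_indic/measurableC.
- by move=> z; rewrite lee_fin mulr_ge0.
- by move=> z; rewrite lee_fin mulr_ge0.
Qed.

(* Chernoff bound: on [lam < L z] the factor [expR (s * (L z - lam))] is at least 1. *)
Lemma ch_prob_gt_le v (L : n.-tuple R -> R) (lam s : R) :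
  measurable_fun setT L -> (0 <= s)%R ->
  ch_prob w v [set z | (lam < L z)%R] <=
  int_Rn (fun z => (expR (s * (L z - lam)) * w v z)%:E).
Proof.
move=> mL s0; apply: le_int_Rn.
- apply/measurable_EFinP/measurable_funM => //; apply: measurable_indic.
  have := measurable_fun_ltr (measurable_cst lam) mL measurableT (Y := [set true]) I.
  by rewrite setTI.
- apply/measurable_EFinP/measurable_funM => //.
  by apply: measurableT_comp => //; apply: measurable_funM => //; apply: measurable_funB.
- by move=> z; rewrite lee_fin mulr_ge0.
move=> z; rewrite lee_fin indicE; case: (boolP (z \in _)) => [|_]; last first.
  by rewrite mul0r mulr_ge0 ?expR_ge0.
rewrite inE /= => hz; rewrite mul1r ler_peMl // -expR0 ler_expR.
by rewrite mulr_ge0 // subr_ge0 ltW.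
Qed.

Lemma Imax_restr_le (T : V -> set (n.-tuple R)) (Q : n.-tuple R -> R) (c : R) :
  (0 < c)%R -> (forall z, 0 <= Q z)%R -> measurable_fun setT Q ->
  int_Rn (fun z => (Q z)%:E) = 1 -> (forall v, measurable (T v)) ->
  (forall v z, T v z -> w v z <= c * Q z)%R ->
  Imax (restr_ch w T) <= (log2 c)%:E.
Proof.
move=> c0 Q0 mQ intQ mT wQ; rewrite /Imax /restr_ch.
have max_ge0 z : (0 <= \big[Num.max/0]_(v : V) (\1_(T v) z * w v z))%R.
  apply: (big_ind (fun x => 0 <= x)%R) => //.
    by move=> x y x0 _; rewrite le_max x0.
  by move=> v _; rewrite mulr_ge0 // indicE.
set I := int_Rn _.
have I_le : I <= c%:E.
  have mQE : measurable_fun setT (fun z => (Q z)%:E) by exact/measurable_EFinP.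
  have QE0 z : 0 <= (Q z)%:E by rewrite lee_fin.
  rewrite -[c%:E]mule1 -intQ -(@int_RnZl _ _ _ _ (ltW c0) mQE QE0).
  apply: le_int_Rn.
  - apply/measurable_EFinP/measurable_bigmaxr => v.
    by apply: measurable_funM => //; exact: measurable_indic.
  - by apply/measurable_EFinP/measurable_funM => //; exact/measurable_EFinP.
  - by move=> z; rewrite lee_fin.
  move=> z; rewrite -EFinM lee_fin; apply: bigmax_le; first by rewrite mulr_ge0 ?(ltW c0).
  move=> v _; rewrite indicE; case: (boolP (z \in T v)) => [/set_mem /wQ|_].
    by rewrite mul1r.
  by rewrite mul0r mulr_ge0 ?(ltW c0).
have : 0 <= I by apply: int_Rn_ge0 => z; rewrite lee_fin.
move: I I_le => [r| |] //= r_le r0; case: ifP => r_gt0; last exact: leNye.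
rewrite lee_fin /log2 ler_wpM2r ?invr_ge0 ?ln_ge0 ?ler1n //.
by rewrite ler_ln ?posrE // -lee_fin.
Qed.

Lemma ch_prob_ge_setC v (A : set (n.-tuple R)) (eps : R) : measurable A ->
  int_Rn (fun z => (w v z)%:E) = 1 -> ch_prob w v (~` A) <= eps%:E ->
  (1 - eps)%:E <= ch_prob w v A.
Proof.
move=> mA w1; have := ch_probC v _ mA; rewrite w1.
have : 0 <= ch_prob w v A by apply: int_Rn_ge0 => z; rewrite lee_fin mulr_ge0.
have : 0 <= ch_prob w v (~` A) by apply: int_Rn_ge0 => z; rewrite lee_fin mulr_ge0.
case: (ch_prob w v A) => [a| |] //; case: (ch_prob w v (~` A)) => [b| |] //=.
rewrite !lee_fin => b0 a0 [] ab; lra.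
Qed.

Lemma smooth_Imax_le_restr (eps : R) (T : V -> set (n.-tuple R)) :
  (forall v, measurable (T v)) -> (forall v, (1 - eps)%:E <= ch_prob w v (T v)) ->
  smooth_Imax eps w <= Imax (restr_ch w T).
Proof. by move=> mT hT; apply: ereal_inf_lbound; exists T. Qed.

End Channel.

Section Gaussian.
Context {R : realType}.
Local Notation mu := (@lebesgue_measure R).

Lemma normal_pdf_sqrtE (m a x : R) : 0 < a ->
  normal_pdf m (Num.sqrt a) x =
  normal_peak (Num.sqrt a) * expR (- (x - m) ^+ 2 / (a *+ 2)).
Proof.
by move=> a0; rewrite normal_pdfE ?gt_eqF ?sqrtr_gt0 //= /normal_fun sqr_sqrtr ?ltW.
Qed.

Lemma normal_peak_sqrt_gt0 (a : R) : 0 < a -> 0 < normal_peak (Num.sqrt a).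
Proof. by move=> a0; rewrite normal_peak_gt0 // gt_eqF // sqrtr_gt0. Qed.

Lemma normal_peak_sqrt_sqr (a : R) : 0 < a ->
  normal_peak (Num.sqrt a) ^+ 2 = (a * pi *+ 2)^-1.
Proof.
move=> a0; rewrite /normal_peak exprVn sqr_sqrtr; first by rewrite sqr_sqrtr ?ltW.
by rewrite mulrn_wge0 // mulr_ge0 ?sqr_ge0 ?pi_ge0.
Qed.

Lemma normal_peak_ratio_sqr (a b : R) : 0 < a -> 0 < b ->
  (normal_peak (Num.sqrt a) / normal_peak (Num.sqrt b)) ^+ 2 = b / a.
Proof.
move=> a0 b0; rewrite expr_div_n !normal_peak_sqrt_sqr //.
have : (pi : R) != 0 by rewrite gt_eqF ?pi_gt0.
by move: (pi : R) => p p0; field; rewrite p0 !gt_eqF.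
Qed.

Variables (v t2 : R).
Hypotheses (v0 : 0 < v) (t20 : 0 < t2).

(* [ln (normal_pdf m (sqrt v) x / normal_pdf 0 (sqrt t2) x)], up to the additive
   constant [ln] of the ratio of the peaks. *)
Definition normal_llr (m x : R) : R :=
  - (2 * v)^-1 * (x - m) ^+ 2 + (2 * t2)^-1 * x ^+ 2.

Lemma measurable_normal_llr m : measurable_fun setT (normal_llr m).
Proof.
apply: measurable_funD; apply: measurable_funM => //; apply: measurable_funX => //.
exact: measurable_funB.
Qed.

Lemma normal_pdf_llr (m x : R) :
  normal_pdf m (Num.sqrt v) x =
  normal_peak (Num.sqrt v) / normal_peak (Num.sqrt t2) * expR (normal_llr m x) *
  normal_pdf 0 (Num.sqrt t2) x.
Proof.
have peak0 : normal_peak (Num.sqrt t2) != 0 by rewrite gt_eqF ?normal_peak_sqrt_gt0.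
rewrite !normal_pdf_sqrtE // [RHS](_ : _ = normal_peak (Num.sqrt v) *
  expR (normal_llr m x + - (x - 0) ^+ 2 / (t2 *+ 2))); last by rewrite expRD; field.
by congr (_ * expR _); rewrite /normal_llr; field; rewrite !gt_eqF.
Qed.

Variable s : R.

Definition tilted_normal_pdf (m x : R) : R :=
  normal_pdf m (Num.sqrt v) x * expR (s * normal_llr m x).

Lemma tilted_normal_pdf_ge0 m x : 0 <= tilted_normal_pdf m x.
Proof. by rewrite mulr_ge0 ?normal_pdf_ge0 ?expR_ge0. Qed.

Lemma measurable_tilted_normal_pdf m : measurable_fun setT (tilted_normal_pdf m).
Proof.
apply: measurable_funM; first exact: measurable_normal_pdf.
apply: measurableT_comp => //; apply: measurable_funM => //.
exact: measurable_normal_llr.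
Qed.

Hypothesis D0 : 0 < (1 + s) * t2 - s * v.
Let D := (1 + s) * t2 - s * v.
Let nu2 := v * t2 / D.

(* Completing the square: the tilted density is a multiple of a Gaussian density
   of variance [nu2]. *)
Lemma tilted_normal_pdfE (m x : R) :
  tilted_normal_pdf m x =
  normal_peak (Num.sqrt v) / normal_peak (Num.sqrt nu2) *
  expR ((1 + s) * s * m ^+ 2 / (2 * D)) *
  normal_pdf ((1 + s) * m * t2 / D) (Num.sqrt nu2) x.
Proof.
have nu0 : 0 < nu2 by rewrite divr_gt0 // mulr_gt0.
have peak0 : normal_peak (Num.sqrt nu2) != 0 by rewrite gt_eqF ?normal_peak_sqrt_gt0.
rewrite /tilted_normal_pdf !normal_pdf_sqrtE // -[LHS]mulrA -expRD.
rewrite [RHS](_ : _ = normal_peak (Num.sqrt v) *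
  expR ((1 + s) * s * m ^+ 2 / (2 * D) +
        - (x - (1 + s) * m * t2 / D) ^+ 2 / (nu2 *+ 2))); last by rewrite expRD; field.
congr (_ * expR _); move: D0; rewrite /normal_llr /nu2 /D => D0'.
by field; rewrite !gt_eqF.
Qed.

Lemma integral_tilted_normal_pdf (m : R) :
  (\int[mu]_x (tilted_normal_pdf m x)%:E =
  (normal_peak (Num.sqrt v) / normal_peak (Num.sqrt nu2) *
   expR ((1 + s) * s * m ^+ 2 / (2 * D)))%:E)%E.
Proof.
under eq_integral => x _ do rewrite tilted_normal_pdfE EFinM.
rewrite ge0_integralZl_EFin ?integral_normal_pdf ?mule1 //.
- by move=> x _; rewrite lee_fin normal_pdf_ge0.
- by apply/measurable_EFinP; exact: measurable_normal_pdf.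
- by rewrite mulr_ge0 ?expR_ge0 // divr_ge0 ?normal_peak_ge0.
Qed.

End Gaussian.

Section AWGNChannel.
Context {R : realType} (sigma2 : R) {V : finType} {n : nat} (e : V -> n.-tuple R).

Lemma int_Rn_prod_normal_pdf (m : 'I_n -> R) (sg : R) :
  int_Rn (fun z => (\prod_(i < n) normal_pdf (m i) sg (tnth z i))%:E) = 1%E.
Proof.
rewrite (@int_Rn_prod _ n (fun i => normal_pdf (m i) sg) (fun=> 1)) ?big1 // => i.
- exact: normal_pdf_ge0.
- exact: measurable_normal_pdf.
- exact: integral_normal_pdf.
Qed.

Lemma awgn_ch_ge0 v z : 0 <= awgn_ch sigma2 e v z.
Proof. by apply: prodr_ge0 => i _; exact: normal_pdf_ge0. Qed.

Lemma measurable_awgn_ch v : measurable_fun setT (awgn_ch sigma2 e v).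
Proof.
by apply: (@measurable_prod_tnth _ n (fun i => normal_pdf _ _)) => i;
  exact: measurable_normal_pdf.
Qed.

Lemma int_Rn_awgn_ch v : int_Rn (fun z => (awgn_ch sigma2 e v z)%:E) = 1%E.
Proof. exact: int_Rn_prod_normal_pdf. Qed.

End AWGNChannel.

Section AWGNBound.
Context {R : realType}.
Context {v P delta : R} {V : finType} {n : nat} {e : V -> n.-tuple R}.
Hypotheses (v0 : 0 < v) (P0 : 0 < P) (delta0 : 0 < delta).
Hypothesis power : forall u, \sum_(i < n) (tnth (e u) i) ^+ 2 <= n%:R * P.

Let t2 := v + delta * v + P.
Let s := delta / 2.
Let D := (1 + s) * t2 - s * v.
Let rho := normal_peak (Num.sqrt v) / normal_peak (Num.sqrt t2).
Let r1 := normal_peak (Num.sqrt v) / normal_peak (Num.sqrt (v * t2 / D)).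
Let Q (z : n.-tuple R) := \prod_(i < n) normal_pdf 0 (Num.sqrt t2) (tnth z i).
Let L u (z : n.-tuple R) := \sum_(i < n) normal_llr v t2 (tnth (e u) i) (tnth z i).
Let cm (m : R) := (1 + s) * s * m ^+ 2 / (2 * D).
(* [lam] is chosen so that the Chernoff bound of [ch_prob_llr_gt_le], namely
   [expR (- (s * lam)) * r1 ^+ n * expR (\sum_i cm (e u)_i)] with the sum bounded
   by [sum_cm_le], equals [expR (- n delta^2 / 8)]. *)
Let lam := (n%:R * delta ^+ 2 / 8 + n%:R * ln r1 + (1 + s) * s * (n%:R * P) / (2 * D)) / s.
Let T u := [set z | L u z <= lam].

Let t2_gt0 : 0 < t2.
Proof. by rewrite !addr_gt0 // mulr_gt0. Qed.
Let s_gt0 : 0 < s.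
Proof. by rewrite divr_gt0. Qed.
Let DE : D = t2 + s * (delta * v + P).
Proof. by rewrite /D /t2; ring. Qed.
Let D_gt0 : 0 < D.
Proof. by rewrite DE addr_gt0 // mulr_gt0 // addr_gt0 // mulr_gt0. Qed.
Let rho_gt0 : 0 < rho.
Proof. by rewrite divr_gt0 ?normal_peak_sqrt_gt0. Qed.
Let r1_gt0 : 0 < r1.
Proof. by rewrite divr_gt0 ?normal_peak_sqrt_gt0 ?divr_gt0 ?mulr_gt0. Qed.

Lemma awgn_ch_llr u z : awgn_ch v e u z = rho ^+ n * expR (L u z) * Q z.
Proof.
rewrite /awgn_ch.
under eq_bigr => i _ do rewrite (normal_pdf_llr v t2 v0 t2_gt0).
by rewrite big_split big_split /= prodr_const card_ord /L expR_sum.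
Qed.

Lemma measurable_llr_sum u : measurable_fun setT (L u).
Proof.
apply: measurable_sum => i.
exact: measurableT_comp (measurable_normal_llr v t2 _) (measurable_tnth i).
Qed.

Lemma measurable_T u : measurable (T u).
Proof.
have := measurable_fun_ler (measurable_llr_sum u) (measurable_cst lam) measurableT
  (Y := [set true]) I.
by rewrite setTI.
Qed.

Lemma setC_T u : ~` T u = [set z | lam < L u z].
Proof. by apply/seteqP; split => z /=; rewrite ltNge => /negP. Qed.

Lemma sum_cm_le u :
  \sum_(i < n) cm (tnth (e u) i) <= (1 + s) * s * (n%:R * P) / (2 * D).
Proof.
have -> : \sum_(i < n) cm (tnth (e u) i) =
    (1 + s) * s / (2 * D) * \sum_(i < n) (tnth (e u) i) ^+ 2.
  by rewrite mulr_sumr; apply: eq_bigr => i _; rewrite /cm; ring.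
rewrite [X in _ <= X](_ : _ = (1 + s) * s / (2 * D) * (n%:R * P)); last by ring.
have s_ge0 := ltW s_gt0; have D_ge0 := ltW D_gt0.
rewrite ler_wpM2l ?power //.
by apply: divr_ge0; [apply: mulr_ge0 => //; exact: addr_ge0 | exact: mulr_ge0].
Qed.

Lemma chernoff_exponent_le u :
  expR (- (s * lam)) * \prod_(i < n) (r1 * expR (cm (tnth (e u) i))) <=
  expR (- (n%:R * delta ^+ 2) / 8).
Proof.
rewrite big_split /= prodr_const card_ord -expR_sum.
rewrite -[r1 in r1 ^+ n]lnK ?posrE // -expRM_natl -!expRD ler_expR.
have -> : s * lam =
    n%:R * delta ^+ 2 / 8 + n%:R * ln r1 + (1 + s) * s * (n%:R * P) / (2 * D).
  by rewrite /lam mulrC divfK // gt_eqF.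
by have := sum_cm_le u; lra.
Qed.

Lemma ln_rho : ln rho = ln (1 + delta + P / v) / 2.
Proof.
have -> : 1 + delta + P / v = rho ^+ 2.
  by rewrite normal_peak_ratio_sqr // /t2; field; rewrite gt_eqF.
by rewrite lnXn // mulr2n; field.
Qed.

Lemma ln_r1_le : ln r1 <= (t2 / D - 1) / 2.
Proof.
have r1_sqr : r1 ^+ 2 = t2 / D.
  by rewrite normal_peak_ratio_sqr ?divr_gt0 ?mulr_gt0 //; field; rewrite !gt_eqF.
have : ln (r1 ^+ 2) <= t2 / D - 1.
  have : 0 < t2 / D by rewrite divr_gt0.
  by rewrite r1_sqr -[X in ln X](subrKC 1) => ?; rewrite le_ln1Dx //; lra.
by rewrite lnXn // mulr2n; lra.
Qed.

Lemma tilt_exponent_le : (t2 / D - 1) / 2 + (1 + s) * s * P / (2 * D) <= delta ^+ 2 / 8.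
Proof.
have -> : (t2 / D - 1) / 2 + (1 + s) * s * P / (2 * D) =
    delta ^+ 2 * (P - 2 * v) / (8 * D).
  have D2 : 0 < (2 + delta) * t2 - delta * v.
    have -> : (2 + delta) * t2 - delta * v = 2 * D by rewrite /D /s; field.
    by rewrite mulr_gt0.
  have := D_gt0; move: D2; rewrite /D /t2 /s => D2 D0.
  by field; rewrite !gt_eqF.
rewrite ler_pdivrMr ?mulr_gt0 // (_ : delta ^+ 2 / 8 * (8 * D) = delta ^+ 2 * D);
  last by field.
apply: ler_wpM2l; first exact: sqr_ge0.
have : 0 < s * (delta * v + P) by rewrite mulr_gt0 // addr_gt0 // mulr_gt0.
have : 0 < delta * v by rewrite mulr_gt0.
rewrite DE /t2; move: (s * (delta * v + P)) (delta * v) => X Y; have := v0; lra.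
Qed.

Lemma lam_le : lam <= n%:R * delta / 2.
Proof.
rewrite /lam ler_pdivrMr //.
have := ler_wpM2l (ler0n R n) ln_r1_le.
have := ler_wpM2l (ler0n R n) tilt_exponent_le.
rewrite /s; lra.
Qed.

Lemma log2_rho_lam_le : log2 (rho ^+ n * expR lam) <=
  n%:R / 2 * log2 (1 + delta + P / v) + n%:R * delta * log2 (expR 1) / 2.
Proof.
have ln2_gt0 : 0 < ln (2 : R) by rewrite ln_gt0 // ltr1n.
rewrite /log2 lnM ?posrE ?exprn_gt0 ?expR_gt0 // lnXn // !expRK ln_rho.
rewrite -[_ *+ n]mulr_natl.
rewrite (_ : n%:R / 2 * (ln (1 + delta + P / v) / ln 2) + n%:R * delta * (1 / ln 2) / 2 =
    (n%:R * (ln (1 + delta + P / v) / 2) + n%:R * delta / 2) / ln 2);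
  last by field; rewrite gt_eqF.
apply: ler_wpM2r; first by rewrite invr_ge0 ltW.
by rewrite lerD2l lam_le.
Qed.

Local Open Scope ereal_scope.

Lemma ch_prob_llr_gt_le u :
  ch_prob (awgn_ch v e) u [set z | (lam < L u z)%R] <=
  (expR (- (n%:R * delta ^+ 2) / 8))%:E.
Proof.
apply: le_trans (ch_prob_gt_le (awgn_ch_ge0 v e) (measurable_awgn_ch v e) u _ lam s
  (measurable_llr_sum u) (ltW s_gt0)) _.
have tilt z : (expR (s * (L u z - lam)) * awgn_ch v e u z)%:E =
    (expR (- (s * lam)))%:E *
    (\prod_(i < n) tilted_normal_pdf v t2 s (tnth (e u) i) (tnth z i))%:E.
  rewrite -EFinM /tilted_normal_pdf big_split /= -expR_sum -mulr_sumr mulrBr expRD.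
  by rewrite /awgn_ch /L; congr EFin; ring.
rewrite (eq_fun tilt) int_RnZl ?expR_ge0 //; last first.
- by move=> z; rewrite lee_fin prodr_ge0 // => i _; exact: tilted_normal_pdf_ge0.
- apply/measurable_EFinP; apply: (@measurable_prod_tnth _ n (fun i => _)) => i.
  exact: measurable_tilted_normal_pdf.
rewrite (@int_Rn_prod _ n (fun i => tilted_normal_pdf v t2 s (tnth (e u) i))
  (fun i => r1 * expR (cm (tnth (e u) i)))%R) -?EFinM.
- by rewrite lee_fin chernoff_exponent_le.
- by move=> i x; exact: tilted_normal_pdf_ge0.
- by move=> i; exact: measurable_tilted_normal_pdf.
- by move=> i; apply: integral_tilted_normal_pdf.
Qed.

Lemma ch_prob_T_ge u :
  (1 - expR (- (n%:R * delta ^+ 2) / 8))%:E <= ch_prob (awgn_ch v e) u (T u).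
Proof.
apply: (ch_prob_ge_setC (awgn_ch_ge0 v e) (measurable_awgn_ch v e) u _ _
  (measurable_T u) (int_Rn_awgn_ch v e u)).
by rewrite setC_T; exact: ch_prob_llr_gt_le.
Qed.

Lemma Imax_restr_T_le :
  Imax (restr_ch (awgn_ch v e) T) <= (log2 (rho ^+ n * expR lam))%:E.
Proof.
apply: (Imax_restr_le (awgn_ch_ge0 v e) (measurable_awgn_ch v e) T Q) measurable_T _.
- by rewrite mulr_gt0 ?exprn_gt0 ?expR_gt0.
- by move=> z; apply: prodr_ge0 => i _; exact: normal_pdf_ge0.
- by apply: (@measurable_prod_tnth _ n (fun=> _)) => i; exact: measurable_normal_pdf.
- exact: (int_Rn_prod_normal_pdf (fun=> 0%R)).
move=> u z /= Tz; rewrite awgn_ch_llr; apply: ler_wpM2r.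
  by apply: prodr_ge0 => i _; exact: normal_pdf_ge0.
by apply: ler_wpM2l; [exact/exprn_ge0/ltW | rewrite ler_expR].
Qed.

Lemma smooth_Imax_awgn_ch_le :
  smooth_Imax (expR (- (n%:R * delta ^+ 2) / 8)) (awgn_ch v e) <=
  (n%:R / 2 * log2 (1 + delta + P / v) + n%:R * delta * log2 (expR 1) / 2)%:E.
Proof.
apply: le_trans (smooth_Imax_le_restr _ _ measurable_T ch_prob_T_ge) _.
by apply: le_trans Imax_restr_T_le _; rewrite lee_fin log2_rho_lam_le.
Qed.

End AWGNBound.

Theorem lemma6 (R : realType) (sigma2 P : R) (hsigma : 0 < sigma2) (hP : 0 < P)
  (l : nat -> nat) (e : forall n : nat, (l n).-tuple bool -> n.-tuple R)
  (hpow : forall (n : nat) (v : (l n).-tuple bool),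
      n%:R^-1 * \sum_(i < n) (tnth (e n v) i) ^+ 2 <= P)
  (delta : R) (hdelta : 0 < delta < 2^-1) :
  exists g : nat -> R,
    (fun n : nat => g n / n%:R) @ \oo --> 0 /\
    \forall n \near \oo,
      (smooth_Imax (expR (- (n%:R * delta ^+ 2) / 8)) (awgn_ch sigma2 (e n))
       <= (n%:R / 2 * log2 (1 + delta + P / sigma2)
           + n%:R * delta * log2 (expR 1) / 2 + g n)%:E)%E.
Proof.
have delta_gt0 : 0 < delta by case/andP: hdelta.
have power n (u : (l n).-tuple bool) : \sum_(i < n) (tnth (e n u) i) ^+ 2 <= n%:R * P.
  case: n u => [|n] u; first by rewrite big_ord0 mul0r.
  by have := hpow n.+1 u; rewrite ler_pdivrMl ?ltr0Sn.
exists (fun=> 0); split.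
  by under eq_fun do rewrite mul0r; exact: (cvg_cst (0 : R^o)).
apply: nearW => n; rewrite addr0.
exact: smooth_Imax_awgn_ch_le hsigma hP delta_gt0 (power n).
Qed.
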